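(* Let $\mathbb{S}\in\mathbb{Z}^{N_X\times N_e}$, $\mathcal{X}=\mathbb{R}^{N_X}_{>0}$, let $\Phi$ be a primal thermodynamic function on $\mathcal{X}$, $\tilde{x}\in\mathcal{X}$, $f_{NE}\in\mathbb{R}^{N_e}$ a constant vector, and $\{\Psi^*_x\}_{x\in\mathcal{X}}$ a family of dissipation functions on $\mathbb{R}^{N_e}$. Consider the flow $$\dot{x}=-\mathbb{S}\,\nabla\Psi^*_x\big(f(x)\big),\qquad f(x):=\mathbb{S}^T\nabla_x\mathcal{D}_\Phi[x\|\tilde{x}]+f_{NE}=\mathbb{S}^T\big(\nabla\Phi(x)-\nabla\Phi(\tilde{x})\big)+f_{NE},$$ with flux $j(x):=\nabla\Psi^*_x(f(x))$, and let $\mathcal{M}^{\mathrm{DB}}:=\{x\in\mathcal{X}: j(x)=0\}$. If $\mathcal{M}^{\mathrm{DB}}\neq\emptyset$, then $f_{NE}\in\mathrm{Im}\,\mathbb{S}^T$ (i.e. the flow is an equilibrium flow).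
   Context: A primal thermodynamic function is a strictly convex differentiable $\Phi:\mathcal{X}\to\mathbb{R}$ such that $\{\nabla\Phi(x):x\in\mathcal{X}\}=\mathbb{R}^{N_X}$ and, for every $x_{in}\in\mathcal{X}$ and $x_{bd}\in\mathbb{R}^{N_X}_{\ge0}\setminus\mathcal{X}$, $\lim_{\lambda\to0^+}\frac{d}{d\lambda}\Phi(\lambda x_{in}+(1-\lambda)x_{bd})=-\infty$. Its Bregman divergence is $\mathcal{D}_\Phi[x\|x']=\Phi(x)-\Phi(x')-\langle x-x',\nabla\Phi(x')\rangle$. A dissipation function on $\mathbb{R}^{N_e}$ is a strictly convex, continuously differentiable, $1$-coercive, even function $\psi$ with $\psi(0)=0$; for such a function $\nabla\psi$ is a bijection of $\mathbb{R}^{N_e}$ with $\nabla\psi(f)=0$ iff $f=0$. *)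

From HB Require Import structures.
From mathcomp Require Import all_boot all_order all_algebra.
From mathcomp Require Import all_classical all_reals all_analysis.
Set Implicit Arguments. Unset Strict Implicit. Unset Printing Implicit Defensive.
Import Order.TTheory GRing.Theory Num.Theory.
Import numFieldNormedType.Exports.
Local Open Scope classical_set_scope.
Local Open Scope ring_scope.

Section Defs.
Variable R : realType.

Definition posvec (n : nat) (x : 'cV[R]_n) : Prop := forall i, 0 < x i 0.
Definition nnegvec (n : nat) (x : 'cV[R]_n) : Prop := forall i, 0 <= x i 0.

Definition grad (n : nat) (F : 'cV[R]_n -> R) (x : 'cV[R]_n) : 'cV[R]_n :=
  \col_i ('d F x (delta_mx i 0)).

Definition strictly_convex_on (n : nat) (D : set 'cV[R]_n) (F : 'cV[R]_n -> R) :=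
  forall x y (t : R), D x -> D y -> x != y -> 0 < t < 1 ->
    F (t *: x + (1 - t) *: y) < t * F x + (1 - t) * F y.

Definition primal_thermo (n : nat) (Phi : 'cV[R]_n -> R) : Prop :=
  [/\ strictly_convex_on (@posvec n) Phi,
      (forall x, posvec x -> differentiable Phi x),
      (forall y : 'cV[R]_n, exists x, posvec x /\ grad Phi x = y) &
      (forall xin xbd, posvec xin -> nnegvec xbd -> ~ posvec xbd ->
         (derive1 (fun l : R => Phi (l *: xin + (1 - l) *: xbd))) l
           @[l --> 0^'+] --> -oo)].

Definition bregman (n : nat) (Phi : 'cV[R]_n -> R) (x x' : 'cV[R]_n) : R :=
  Phi x - Phi x' - (\sum_i (x - x') i 0 * grad Phi x' i 0).

Definition dissipation (n : nat) (psi : 'cV[R]_n -> R) : Prop :=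
  [/\ strictly_convex_on setT psi,
      (forall f, differentiable psi f) /\ continuous (grad psi),
      (forall M : R, exists r : R, forall f, r < `|f| -> M < psi f / `|f|),
      (forall f, psi (- f) = psi f) &
      psi 0 = 0].

Definition Sr (NX Ne : nat) (S : 'M[int]_(NX, Ne)) : 'M[R]_(NX, Ne) :=
  map_mx (fun z : int => z%:~R) S.

Definition force (NX Ne : nat) (S : 'M[int]_(NX, Ne)) (Phi : 'cV[R]_NX -> R)
  (xt : 'cV[R]_NX) (fNE : 'cV[R]_Ne) (x : 'cV[R]_NX) : 'cV[R]_Ne :=
  (Sr S)^T *m (grad Phi x - grad Phi xt) + fNE.

Definition flux (NX Ne : nat) (S : 'M[int]_(NX, Ne)) (Phi : 'cV[R]_NX -> R)
  (xt : 'cV[R]_NX) (fNE : 'cV[R]_Ne) (Psi : 'cV[R]_NX -> 'cV[R]_Ne -> R)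
  (x : 'cV[R]_NX) : 'cV[R]_Ne :=
  grad (Psi x) (force S Phi xt fNE x).

End Defs.

(** A dissipation function is strictly convex, even and vanishes at 0, so it
    is positive away from 0; on the other hand a critical point of a convex
    differentiable function is a global minimum.  Hence the only zero of
    [grad psi] is [0], so a vanishing flux forces the force
    [S^T (grad Phi x - grad Phi xt) + fNE] to vanish, which exhibits [fNE] as
    an element of [Im S^T]. *)
From HB Require Import structures.
From mathcomp Require Import all_boot all_order all_algebra.
From mathcomp Require Import all_classical all_reals all_analysis.
From mathcomp Require Import ring lra.
Set Implicit Arguments. Unset Strict Implicit. Unset Printing Implicit Defensive.
Import Order.TTheory GRing.Theory Num.Theory.
Import numFieldNormedType.Exports.
Local Open Scope classical_set_scope.
Local Open Scope ring_scope.

Section CriticalPoints.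
Variables (R : realType) (n : nat).
Implicit Types (F : 'cV[R]_n -> R) (x y : 'cV[R]_n).

Lemma diff_eq0_of_grad_eq0 F x : grad F x = 0 -> forall v, 'd F x v = 0.
Proof.
move=> gF0 v; rewrite [v]matrix_sum_delta linear_sum big1 // => i _.
rewrite big_ord1 linearZ /=.
have := congr1 (fun M : 'cV[R]_n => M i 0) gF0; rewrite /grad !mxE => ->.
by rewrite scaler0.
Qed.

Lemma strictly_convex_critical_le F x y :
  strictly_convex_on setT F -> differentiable F x ->
  (forall v, 'd F x v = 0) -> F x <= F y.
Proof.
move=> convF dFx dF0; have [<-|xNy] := eqVneq x y; first by [].
rewrite leNgt; apply/negP => Fyx.
(* The difference quotients of [F] along [y - x] tend to [0], yet convexity
   keeps them below [F y - F x < 0] on [(0, 1)]. *)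
pose q h := h^-1 *: (F (h *: (y - x) + x) - F x).
have q_cvg0 : q h @[h --> 0^'] --> 0.
  have : q h @[h --> 0^'] --> 'D_(y - x) F x by exact: diff_derivable.
  by rewrite deriveE // dF0.
have q_lt h : 0 < h < 1 -> q h < F y - F x.
  move=> /andP[h0 h1].
  have := convF y x h I I; rewrite eq_sym xNy h0 h1 => /(_ isT isT).
  have -> : h *: y + (1 - h) *: x = h *: (y - x) + x.
    by rewrite scalerBr scalerBl scale1r addrA addrAC.
  by move=> ineq; rewrite /q -[_ *: _]/(h^-1 * _) ltr_pdivrMl //; lra.
have q_ge : \forall h \near 0^'+, F y - F x < q h.
  have : \forall h \near 0^', F y - F x < q h by apply: (cvgr_gt 0 q_cvg0); lra.
  rewrite !near_withinE; apply: filterS => h qh h0; apply: qh.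
  by rewrite gt_eqF.
have [h [[qh h0] h1]] := filter_ex (filterI (filterI q_ge (nbhs_right_gt 0))
  (nbhs_right_lt (@ltr01 R))).
by have := q_lt h; rewrite h0 h1 => /(_ isT); lra.
Qed.

Lemma strictly_convex_even_gt0 F x :
  strictly_convex_on setT F -> (forall y, F (- y) = F y) -> F 0 = 0 ->
  x != 0 -> 0 < F x.
Proof.
move=> convF evenF F0 x0.
have xNx : x != - x.
  apply: contra x0 => /eqP xNx; have : x + x = 0 by rewrite {2}xNx subrr.
  by rewrite -mulr2n -scaler_nat => /eqP; rewrite scaler_eq0 pnatr_eq0.
have := convF x (- x) 2^-1 I I xNx.
rewrite invr_gt0 ltr0n invf_lt1 ?ltr0n // ltr1n => /(_ isT).
have -> : 1 - 2^-1 = 2^-1 :> R by field.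
by rewrite -scalerDr subrr scaler0 F0 evenF; lra.
Qed.

Lemma dissipation_grad_eq0 F x : dissipation F -> grad F x = 0 -> x = 0.
Proof.
case=> convF [dF _] _ evenF F0 gF0; apply/eqP; apply/negPn/negP => x0.
have := strictly_convex_even_gt0 convF evenF F0 x0.
have := strictly_convex_critical_le 0 convF (dF x) (diff_eq0_of_grad_eq0 gF0).
by rewrite F0; lra.
Qed.

End CriticalPoints.

Theorem mainTheorem3 (R : realType) (NX Ne : nat) (S : 'M[int]_(NX, Ne))
  (Phi : 'cV[R]_NX -> R) (xt : 'cV[R]_NX) (fNE : 'cV[R]_Ne)
  (Psi : 'cV[R]_NX -> 'cV[R]_Ne -> R) :
  primal_thermo Phi ->
  posvec xt ->
  (forall x, posvec x -> dissipation (Psi x)) ->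
  (exists x, posvec x /\ flux S Phi xt fNE Psi x = 0) ->
  exists y : 'cV[R]_NX, fNE = (Sr R S)^T *m y.
Proof.
move=> _ _ dissPsi [x [xpos jx0]].
have := dissipation_grad_eq0 (dissPsi x xpos) jx0; rewrite /force => fx0.
exists (- (grad Phi x - grad Phi xt)).
by rewrite mulmxN; apply/eqP; rewrite -addr_eq0 addrC fx0.
Qed.
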